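(* Let $G$ be an affine algebraic group over an algebraically closed field such that $G^0$ is semisimple. If $g\in G$ is isolated in $G$, then the semisimple part $g_s$ of $g$ has finite order.
   Context: For an algebraic group $H$, $H^0$ is its identity component, $\mathcal{Z}_H$ its center and $Z_H(x)$ the centralizer of $x$; $g=g_sg_u$ is the Jordan decomposition. An element $g\in G$ is isolated in $G$ if $(\mathcal{Z}_{Z_G(g_s)^0}\cap Z_G(g_u))^0=(\mathcal{Z}_{G^0}\cap Z_G(g))^0$. *)

From HB Require Import structures.
From mathcomp Require Import all_boot all_order all_algebra.
From mathcomp.multinomials Require Import mpoly.
Set Implicit Arguments. Unset Strict Implicit. Unset Printing Implicit Defensive.
Import GRing.Theory.
Local Open Scope ring_scope.

(* Linear algebraic groups are realized as Zariski-closed subgroups of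
   GL_{n+1}(F), F algebraically closed.  Subsets of matrices are Prop-valued
   predicates. *)

Section AlgGroups.
Variables (F : closedFieldType) (n : nat).
Local Notation M := 'M[F]_n.+1.
Definition mset := M -> Prop.

Definition mx_eval (p : {mpoly F[n.+1 * n.+1]}) (A : M) : F :=
  p.@[fun i => mxvec A 0 i].

(* Zariski-closed subsets of GL_{n+1}(F) (subspace topology from M_{n+1}(F)) *)
Definition zariski_closed (X : mset) : Prop :=
  (forall A, X A -> A \in unitmx) /\
  exists S : {mpoly F[n.+1 * n.+1]} -> Prop,
    forall A, A \in unitmx -> (X A <-> forall p, S p -> mx_eval p A = 0).

Definition zariski_connected (Y : mset) : Prop :=
  ~ exists C1 C2 : mset,
      [/\ zariski_closed C1 /\ zariski_closed C2,
          (forall x, Y x -> C1 x \/ C2 x),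
          (exists x, Y x /\ C1 x), (exists x, Y x /\ C2 x) &
          (forall x, Y x -> C1 x -> C2 x -> False)].

Definition is_subgroup (H : mset) : Prop :=
  [/\ H 1, (forall x y, H x -> H y -> H (x * y)) &
      (forall x, H x -> H x^-1)].

Definition alg_group (G : mset) : Prop :=
  zariski_closed G /\ is_subgroup G.

Definition id_comp (H : mset) : mset :=
  fun x => exists Y : mset,
    [/\ (forall y, Y y -> H y), zariski_connected Y, Y 1 & Y x].

Definition center (H : mset) : mset :=
  fun x => H x /\ forall y, H y -> x * y = y * x.

Definition centralizer (G : mset) (x : M) : mset :=
  fun y => G y /\ y * x = x * y.

Definition setI_m (A B : mset) : mset := fun x => A x /\ B x.

Inductive gen (A : mset) : mset :=
  | gen1 : gen A 1
  | gen_in x : A x -> gen A x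
  | genM x y : gen A x -> gen A y -> gen A (x * y)
  | genV x : gen A x -> gen A x^-1.

Definition derived (H : mset) : mset :=
  gen (fun z => exists x y, [/\ H x, H y & z = x^-1 * y^-1 * x * y]).

Definition solvable_m (H : mset) : Prop :=
  exists k, forall x, iter k derived H x -> x = 1.

Definition normal_in (N H : mset) : Prop :=
  forall x h, N x -> H h -> N (h^-1 * x * h).

(* A connected algebraic group H is semisimple if its radical (the largest
   closed connected solvable normal subgroup) is trivial, i.e. every closed
   connected solvable normal subgroup is trivial. *)
Definition semisimple (H : mset) : Prop :=
  alg_group H /\ zariski_connected H /\
  forall N : mset, alg_group N -> (forall x, N x -> H x) ->
    zariski_connected N -> solvable_m N -> normal_in N H ->
    forall x, N x -> x = 1.

Definition unipotent (u : M) : Prop := exists m, (u - 1) ^+ m = 0.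

Definition jordan_decomp (g gs gu : M) : Prop :=
  [/\ g = gs * gu, gs * gu = gu * gs, gs \in unitmx,
      diagonalizable gs & unipotent gu].

Definition mset_eq (A B : mset) : Prop := forall x, A x <-> B x.

Definition isolated (G : mset) (g gs gu : M) : Prop :=
  mset_eq
    (id_comp (setI_m (center (id_comp (centralizer G gs))) (centralizer G gu)))
    (id_comp (setI_m (center (id_comp G)) (centralizer G g))).

End AlgGroups.

(* Write g_s = P^-1 diag(lam) P.  If g_s had infinite order, some eigenvalue would not be a
   root of unity, so the group of multiplicative relations d (prod_i lam_i^d_i = 1) would be
   a proper sublattice of Z^N and some nonzero c in Z^N would be orthogonal to it.  The torus
   t |-> P^-1 diag(t^c_i) P then lies in the Zariski closure of the powers of g: a polynomial
   vanishing on every g^k = P^-1 diag(lam^k) P (sum_l C(k,l) (g_u - 1)^l) is an exponential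
   polynomial in k, so it vanishes separately on each class of monomials with the same value
   prod_i lam_i^a_i, and diag(t^c_i) cannot tell such monomials apart.  Being connected and
   centralising Z_G(g_s) and g_u, the torus lies in (Z(Z_G(g_s)^0) \cap Z_G(g_u))^0, hence, g
   being isolated, in the center of G^0.  Its Zariski closure is then a closed connected
   abelian normal subgroup of the semisimple group G^0, hence trivial: a contradiction. *)

From HB Require Import structures.
From mathcomp Require Import all_boot all_order all_algebra.
From mathcomp.multinomials Require Import mpoly.
From Stdlib Require Import FunctionalExtensionality Classical.
From mathcomp Require Import zify ring.
Set Implicit Arguments. Unset Strict Implicit. Unset Printing Implicit Defensive.
Import GRing.Theory.
Local Open Scope ring_scope.

Section PolynomialFunctions.
Variables (F : fieldType) (X : Type) (k : nat) (ev : X -> 'I_k -> F).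

Definition polyfun (f : X -> F) :=
  exists p : {mpoly F[k]}, forall x, f x = p.@[ev x].

Definition polyfun_mx a b (H : X -> 'M[F]_(a, b)) :=
  forall i j, polyfun (fun x => H x i j).

Lemma polyfun_ext f g : polyfun f -> (forall x, f x = g x) -> polyfun g.
Proof. by move=> [p Hp] fg; exists p => x; rewrite -fg. Qed.

Lemma polyfun_cst c : polyfun (fun _ => c).
Proof. by exists c%:MP => x; rewrite mevalC. Qed.

Lemma polyfun_var i : polyfun (fun x => ev x i).
Proof. by exists 'X_i => x; rewrite mevalXU. Qed.

Lemma polyfunD f g : polyfun f -> polyfun g -> polyfun (fun x => f x + g x).
Proof. by move=> [p Hp] [q Hq]; exists (p + q) => x; rewrite mevalD Hp Hq. Qed.

Lemma polyfunM f g : polyfun f -> polyfun g -> polyfun (fun x => f x * g x).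
Proof. by move=> [p Hp] [q Hq]; exists (p * q) => x; rewrite mevalM Hp Hq. Qed.

Lemma polyfunN f : polyfun f -> polyfun (fun x => - f x).
Proof. by move=> [p Hp]; exists (- p) => x; rewrite mevalN Hp. Qed.

Lemma polyfunB f g : polyfun f -> polyfun g -> polyfun (fun x => f x - g x).
Proof. by move=> pf /polyfunN; apply: polyfunD. Qed.

Lemma polyfun_sum (I : Type) (r : seq I) (P : pred I) (f : I -> X -> F) :
  (forall i, polyfun (f i)) -> polyfun (fun x => \sum_(i <- r | P i) f i x).
Proof.
move=> pf; elim: r => [|a r IH].
  by apply: polyfun_ext (polyfun_cst 0) _ => x; rewrite big_nil.
case Pa: (P a); last by apply: polyfun_ext IH _ => x; rewrite big_cons Pa.
by apply: polyfun_ext (polyfunD (pf a) IH) _ => x; rewrite big_cons Pa.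
Qed.

Lemma polyfun_prod (I : Type) (r : seq I) (P : pred I) (f : I -> X -> F) :
  (forall i, polyfun (f i)) -> polyfun (fun x => \prod_(i <- r | P i) f i x).
Proof.
move=> pf; elim: r => [|a r IH].
  by apply: polyfun_ext (polyfun_cst 1) _ => x; rewrite big_nil.
case Pa: (P a); last by apply: polyfun_ext IH _ => x; rewrite big_cons Pa.
by apply: polyfun_ext (polyfunM (pf a) IH) _ => x; rewrite big_cons Pa.
Qed.

Lemma polyfunX f m : polyfun f -> polyfun (fun x => f x ^+ m).
Proof.
move=> pf; elim: m => [|m IH]; first by apply: polyfun_ext (polyfun_cst 1) _.
by apply: polyfun_ext (polyfunM pf IH) _ => x; rewrite exprS.
Qed.

Lemma polyfun_meval j (w : X -> 'I_j -> F) (p : {mpoly F[j]}) :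
  (forall i, polyfun (fun x => w x i)) -> polyfun (fun x => p.@[w x]).
Proof.
move=> pw; apply: polyfun_ext (_ : polyfun (fun x =>
  \sum_(m <- msupp p) p@_m * \prod_i w x i ^+ m i)) _; last by move=> x; rewrite mevalE.
apply: polyfun_sum => m; apply: polyfunM; first exact: polyfun_cst.
by apply: polyfun_prod => i; apply: polyfunX.
Qed.

Lemma polyfun_mx_cst a b (C : 'M[F]_(a, b)) : polyfun_mx (fun _ => C).
Proof. by move=> i j; apply: polyfun_cst. Qed.

Lemma polyfun_mxM a b c (H1 : X -> 'M[F]_(a, b)) (H2 : X -> 'M[F]_(b, c)) :
  polyfun_mx H1 -> polyfun_mx H2 -> polyfun_mx (fun x => H1 x *m H2 x).
Proof.
move=> p1 p2 i j; apply: polyfun_ext (_ : polyfun (fun x => \sum_l H1 x i l * H2 x l j)) _.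
  by apply: polyfun_sum => l; apply: polyfunM.
by move=> x; rewrite mxE.
Qed.

Lemma polyfun_mxZ a b (s : X -> F) (H : X -> 'M[F]_(a, b)) :
  polyfun s -> polyfun_mx H -> polyfun_mx (fun x => s x *: H x).
Proof. by move=> ps pH i j; apply: polyfun_ext (polyfunM ps (pH i j)) _ => x; rewrite mxE. Qed.

Lemma polyfun_mx_sum a b (I : Type) (r : seq I) (H : I -> X -> 'M[F]_(a, b)) :
  (forall l, polyfun_mx (H l)) -> polyfun_mx (fun x => \sum_(l <- r) H l x).
Proof.
move=> pH i j; apply: polyfun_ext (_ : polyfun (fun x => \sum_(l <- r) H l x i j)) _.
  by apply: polyfun_sum => l; apply: pH.
by move=> x; rewrite summxE.
Qed.

Lemma polyfun_mx_diag m (f : 'I_m -> X -> F) :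
  (forall i, polyfun (f i)) -> polyfun_mx (fun x => diag_mx (\row_i f i x)).
Proof.
move=> pf a b; case: (eqVneq a b) => [<-|ab].
  by apply: polyfun_ext (pf a) _ => x; rewrite !mxE eqxx.
by apply: polyfun_ext (polyfun_cst 0) _ => x; rewrite !mxE (negPf ab).
Qed.

Lemma polyfun_det a (H : X -> 'M[F]_a) : polyfun_mx H -> polyfun (fun x => \det (H x)).
Proof.
move=> pH; apply: polyfun_sum => s; apply: polyfunM; first exact: polyfun_cst.
by apply: polyfun_prod => i; apply: pH.
Qed.

Lemma polyfun_adj a (H : X -> 'M[F]_a) : polyfun_mx H -> polyfun_mx (fun x => \adj (H x)).
Proof.
move=> pH i j; apply: polyfun_ext (_ : polyfun (fun x => cofactor (H x) j i)) _; last first.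
  by move=> x; rewrite mxE.
apply: polyfunM; first exact: polyfun_cst.
by apply: polyfun_det => u v; apply: polyfun_ext (pH _ _) _ => x; rewrite !mxE.
Qed.

Lemma polyfun_mxvec a b (H : X -> 'M[F]_(a, b)) :
  polyfun_mx H -> forall i, polyfun (fun x => mxvec (H x) 0 i).
Proof.
by move=> pH i; case/mxvec_indexP: i => u v; apply: polyfun_ext (pH u v) _ => x; rewrite mxvecE.
Qed.

End PolynomialFunctions.

Lemma polyfun_mx_eval (F : closedFieldType) (X : Type) (k : nat) (ev : X -> 'I_k -> F)
    n (H : X -> 'M[F]_n.+1) (p : {mpoly F[n.+1 * n.+1]}) :
  polyfun_mx ev H -> polyfun ev (fun x => mx_eval p (H x)).
Proof. by move=> pH; apply: polyfun_meval; apply: polyfun_mxvec. Qed.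

Section FiniteDifferences.
Variable R : ringType.
Implicit Types (f g : nat -> R) (c : R).

Definition fdiff f : nat -> R := fun k => f k.+1 - f k.

Definition fdiff_nil f := exists J, iter J fdiff f = (fun _ => 0).

Lemma iter_fdiff0 J : iter J fdiff (fun _ => 0) = (fun _ => 0 : R).
Proof.
elim: J => //= J ->; apply: functional_extensionality => k; exact: subrr.
Qed.

Lemma iter_fdiffD J f g :
  iter J fdiff (fun k => f k + g k) = (fun k => iter J fdiff f k + iter J fdiff g k).
Proof.
elim: J => //= J ->; apply: functional_extensionality => k.
by rewrite /fdiff addrACA opprD.
Qed.

Lemma iter_fdiff_mull J c f :
  iter J fdiff (fun k => c * f k) = (fun k => c * iter J fdiff f k).
Proof. by elim: J => //= J ->; apply: functional_extensionality => k; rewrite /fdiff mulrBr. Qed.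

Lemma iter_fdiff_shift J f : iter J fdiff (fun k => f k.+1) = (fun k => iter J fdiff f k.+1).
Proof. by elim: J => //= J ->. Qed.

Lemma fdiffM f g : fdiff (fun k => f k * g k) = (fun k => fdiff f k * g k.+1 + f k * fdiff g k).
Proof.
by apply: functional_extensionality => k; rewrite /fdiff mulrBl mulrBr addrA subrK.
Qed.

Lemma iter_fdiff_nil J i f : iter J fdiff f = (fun _ => 0) -> iter (i + J) fdiff f = (fun _ => 0).
Proof. by move=> fJ; rewrite iterD fJ iter_fdiff0. Qed.

Lemma fdiff_nil_ext f g : fdiff_nil f -> (forall k, f k = g k) -> fdiff_nil g.
Proof. by move=> nf fg; rewrite -(functional_extensionality _ _ fg). Qed.

Lemma fdiff_nil_cst c : fdiff_nil (fun _ => c).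
Proof. by exists 1%N; apply: functional_extensionality => k; rewrite /= /fdiff subrr. Qed.

Lemma fdiff_nilD f g : fdiff_nil f -> fdiff_nil g -> fdiff_nil (fun k => f k + g k).
Proof.
move=> [a fa] [b gb]; exists (b + a)%N.
rewrite iter_fdiffD (iter_fdiff_nil b fa) addnC (iter_fdiff_nil a gb).
by apply: functional_extensionality => k; rewrite addr0.
Qed.

Lemma fdiff_nil_mull c f : fdiff_nil f -> fdiff_nil (fun k => c * f k).
Proof.
move=> [a fa]; exists a; rewrite iter_fdiff_mull fa.
by apply: functional_extensionality => k; rewrite mulr0.
Qed.

Lemma fdiff_nil_shift f : fdiff_nil f -> fdiff_nil (fun k => f k.+1).
Proof. by move=> [a fa]; exists a; rewrite iter_fdiff_shift fa. Qed.

(* By the Leibniz rule fdiffM, each difference of f * g lowers the order of f or that of g. *)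
Lemma iter_fdiffM_nil s a b f g : (a + b <= s)%N ->
  iter a fdiff f = (fun _ => 0) -> iter b fdiff g = (fun _ => 0) ->
  iter s fdiff (fun k => f k * g k) = (fun _ => 0).
Proof.
have mul_eq0 (h1 h2 : nat -> R) J : h1 = (fun _ => 0) \/ h2 = (fun _ => 0) ->
    iter J fdiff (fun k => h1 k * h2 k) = (fun _ => 0).
  move=> h0; rewrite -(iter_fdiff0 J); congr (iter J fdiff _).
  by apply: functional_extensionality => k; case: h0 => ->; rewrite ?mul0r ?mulr0.
elim: s a b f g => [|s IH] [|a] [|b] f g // sab fa gb;
  try by apply: mul_eq0; (left; exact: fa) || (right; exact: gb).
have dfa : iter a fdiff (fdiff f) = (fun _ => 0) by rewrite -iterSr.
have dgb : iter b fdiff (fdiff g) = (fun _ => 0) by rewrite -iterSr.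
have sgb : iter b.+1 fdiff (fun k => g k.+1) = (fun _ => 0) by rewrite iter_fdiff_shift gb.
rewrite iterSr fdiffM iter_fdiffD (IH _ _ _ _ _ dfa sgb) ?(IH _ _ _ _ _ fa dgb); try lia.
by apply: functional_extensionality => k; rewrite addr0.
Qed.

Lemma fdiff_nilM f g : fdiff_nil f -> fdiff_nil g -> fdiff_nil (fun k => f k * g k).
Proof. by move=> [a fa] [b gb]; exists (a + b)%N; exact: iter_fdiffM_nil fa gb. Qed.

Lemma fdiff_nil_sum (I : Type) (r : seq I) (P : pred I) (f : I -> nat -> R) :
  (forall i, fdiff_nil (f i)) -> fdiff_nil (fun k => \sum_(i <- r | P i) f i k).
Proof.
move=> nf; elim: r => [|a r IH].
  by apply: fdiff_nil_ext (fdiff_nil_cst 0) _ => k; rewrite big_nil.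
case Pa: (P a); last by apply: fdiff_nil_ext IH _ => k; rewrite big_cons Pa.
by apply: fdiff_nil_ext (fdiff_nilD (nf a) IH) _ => k; rewrite big_cons Pa.
Qed.

Lemma fdiff_nil_prod (I : Type) (r : seq I) (P : pred I) (f : I -> nat -> R) :
  (forall i, fdiff_nil (f i)) -> fdiff_nil (fun k => \prod_(i <- r | P i) f i k).
Proof.
move=> nf; elim: r => [|a r IH].
  by apply: fdiff_nil_ext (fdiff_nil_cst 1) _ => k; rewrite big_nil.
case Pa: (P a); last by apply: fdiff_nil_ext IH _ => k; rewrite big_cons Pa.
by apply: fdiff_nil_ext (fdiff_nilM (nf a) IH) _ => k; rewrite big_cons Pa.
Qed.

Lemma fdiff_nilX f m : fdiff_nil f -> fdiff_nil (fun k => f k ^+ m).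
Proof.
move=> nf; elim: m => [|m IH]; first exact: fdiff_nil_cst.
by apply: fdiff_nil_ext (fdiff_nilM nf IH) _ => k; rewrite exprS.
Qed.

Lemma fdiff_nil_binomial j : fdiff_nil (fun k => ('C(k, j))%:R).
Proof.
exists j.+1; elim: j => [|j IH].
  by apply: functional_extensionality => k; rewrite /= /fdiff !bin0 subrr.
rewrite iterSr -[RHS]IH; congr (iter _ _ _).
by apply: functional_extensionality => k; rewrite /fdiff binS natrD addrAC subrr add0r.
Qed.

End FiniteDifferences.

Arguments fdiff {R} f k.

Section ExponentialPolynomials.
Variable F : fieldType.
Implicit Types (f h : nat -> F) (v w : F).

Definition tdiff v w f : nat -> F := fun k => v * f k.+1 - w * f k.

Lemma geometric_fdiff_nil_eq0 f r : fdiff_nil f -> r != 1 ->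
  (forall k, f k.+1 = r * f k) -> forall k, f k = 0.
Proof.
move=> [J fJ] r1 fS.
have fE k : f k = r ^+ k * f 0%N.
  by elim: k => [|k IH]; rewrite ?expr0 ?mul1r // fS IH exprS mulrA.
have dE i : iter i fdiff f = (fun k => (r - 1) ^+ i * (r ^+ k * f 0%N)).
  elim: i => [|i IH] /=; first by apply: functional_extensionality => k; rewrite expr0 mul1r fE.
  rewrite IH; apply: functional_extensionality => k.
  by rewrite /fdiff !exprS; ring.
move: (congr1 (fun h => h 0%N) fJ); rewrite dE /= expr0 mul1r => /eqP.
rewrite mulf_eq0 expf_eq0 subr_eq0 (negPf r1) andbF /= => /eqP f0 k.
by rewrite fE f0 mulr0.
Qed.

Lemma iter_tdiff0 J v w : iter J (tdiff v w) (fun _ => 0) = (fun _ => 0).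
Proof.
elim: J => //= J ->; apply: functional_extensionality => k.
by rewrite /tdiff !mulr0 subr0.
Qed.

Lemma iter_tdiff_sum J w (I : Type) (r : seq I) (h : I -> nat -> F) :
  iter J (tdiff 1 w) (fun k => \sum_(i <- r) h i k) =
  (fun k => \sum_(i <- r) iter J (tdiff 1 w) (h i) k).
Proof.
elim: J => //= J ->; apply: functional_extensionality => k.
by rewrite /tdiff mul1r mulr_sumr -sumrB; under eq_bigr do rewrite mul1r.
Qed.

Lemma iter_tdiff_geometric J v w f :
  iter J (tdiff 1 w) (fun k => v ^+ k * f k) = (fun k => v ^+ k * iter J (tdiff v w) f k).
Proof.
elim: J => //= J ->; apply: functional_extensionality => k.
by rewrite /tdiff mul1r mulrBr exprS !mulrA [w * _]mulrC [v ^+ k * v]mulrC.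
Qed.

Lemma iter_tdiff_diag J w f : iter J (tdiff w w) f = (fun k => w ^+ J * iter J fdiff f k).
Proof.
elim: J => [|J IH] /=; first by apply: functional_extensionality => k; rewrite mul1r.
rewrite IH; apply: functional_extensionality => k.
by rewrite /tdiff /fdiff mulrBr !mulrA -!exprS.
Qed.

Lemma fdiff_nil_tdiff v w f : fdiff_nil f -> fdiff_nil (tdiff v w f).
Proof.
move=> nf; apply: fdiff_nil_ext (fdiff_nilD (fdiff_nil_mull v (fdiff_nil_shift nf))
  (fdiff_nil_mull (- w) nf)) _ => k.
by rewrite /tdiff mulNr.
Qed.

Lemma fdiff_nil_iter_tdiff J v w f : fdiff_nil f -> fdiff_nil (iter J (tdiff v w) f).
Proof. by elim: J => //= J IH nf; apply/fdiff_nil_tdiff/IH. Qed.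

Lemma tdiff_inj v w f : v != 0 -> v != w -> fdiff_nil f ->
  (forall k, tdiff v w f k = 0) -> forall k, f k = 0.
Proof.
move=> v0 vw nf tf; apply: (geometric_fdiff_nil_eq0 (r := w / v)) => //.
  by apply: contra vw => /eqP wv1; rewrite -[w](divfK v0) wv1 mul1r.
move=> k; apply: (mulfI v0); move/eqP: (tf k); rewrite subr_eq0 => /eqP ->.
by rewrite mulrA [v * _]mulrC divfK.
Qed.

Lemma iter_tdiff_inj J v w f : v != 0 -> v != w -> fdiff_nil f ->
  (forall k, iter J (tdiff v w) f k = 0) -> forall k, f k = 0.
Proof.
elim: J f => [|J IH] f v0 vw nf // fJ.
rewrite iterSr in fJ; exact: tdiff_inj (IH _ v0 vw (fdiff_nil_tdiff v w nf) fJ).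
Qed.

(* With J such that fdiff^J kills R w, the operator (tdiff 1 w)^J removes the
   w-term and maps v^k f(k) to v^k ((tdiff v w)^J f)(k); tdiff v w is injective on sequences
   with nilpotent differences as soon as v != w. *)
Lemma exp_poly_coef_eq0 (V : seq F) (R : F -> nat -> F) : uniq V ->
  (forall v, v \in V -> v != 0) -> (forall v, v \in V -> fdiff_nil (R v)) ->
  (forall k, \sum_(v <- V) v ^+ k * R v k = 0) ->
  forall v, v \in V -> forall k, R v k = 0.
Proof.
elim: V R => [|w V IH] R //= /andP[wV uV] nz nl sum0.
have [J RwJ] := nl w (mem_head _ _).
have sumJ k : \sum_(v <- V) v ^+ k * iter J (tdiff v w) (R v) k = 0.
  have := congr1 (fun h => iter J (tdiff 1 w) h k) (functional_extensionality _ _ sum0).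
  rewrite /= iter_tdiff_sum iter_tdiff0 big_cons iter_tdiff_geometric iter_tdiff_diag RwJ.
  rewrite !mulr0 add0r => sumJ0; rewrite -[RHS]sumJ0.
  by apply: eq_bigr => v _; rewrite iter_tdiff_geometric.
have RV v : v \in V -> forall k, R v k = 0.
  move=> vV; have vwV : v \in w :: V by rewrite in_cons vV orbT.
  apply: (iter_tdiff_inj (J := J) (w := w) (nz v vwV)); first by apply: contra wV => /eqP <-.
    exact: nl.
  apply: (IH (fun v => iter J (tdiff v w) (R v))) => // u uV1.
    by apply: nz; rewrite in_cons uV1 orbT.
  by apply/fdiff_nil_iter_tdiff/nl; rewrite in_cons uV1 orbT.
have Rw k : R w k = 0.
  move: (sum0 k); rewrite big_cons big_seq big1 => [|v vV]; last by rewrite RV ?mulr0.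
  by rewrite addr0 => /eqP; rewrite mulf_eq0 expf_eq0 (negPf (nz w (mem_head _ _))) andbF => /eqP.
by move=> v; rewrite in_cons => /orP[/eqP -> //|]; exact: RV.
Qed.

End ExponentialPolynomials.

Lemma big_partition_undup (R : Type) (idx : R) (op : Monoid.com_law idx) (I T : eqType)
    (s : seq I) (val : I -> T) (G : I -> R) :
  \big[op/idx]_(m <- s) G m =
  \big[op/idx]_(v <- undup (map val s)) \big[op/idx]_(m <- s | val m == v) G m.
Proof.
under [RHS]eq_bigr => v _ do rewrite big_mkcond.
rewrite exchange_big /= [LHS]big_seq [RHS]big_seq; apply: eq_bigr => m ms.
rewrite -big_mkcond -big_filter.
have -> : [seq v <- undup (map val s) | val m == v] = [:: val m].
  rewrite (eq_filter (a2 := pred1 (val m))) => [|v]; last by rewrite /= eq_sym.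
  apply: filter_pred1_uniq; first exact: undup_uniq.
  by rewrite mem_undup; apply: map_f.
by rewrite big_seq1.
Qed.

Definition dmx (R : ringType) m (mu : 'I_m -> R) : 'M[R]_m := diag_mx (\row_i mu i).

Lemma dmxE (R : ringType) m (mu : 'I_m -> R) i j : dmx mu i j = mu i *+ (i == j).
Proof. by rewrite /dmx !mxE. Qed.

Lemma dmxM (R : comRingType) m (a b : 'I_m -> R) :
  dmx a *m dmx b = dmx (fun i => a i * b i).
Proof.
apply/matrixP => i j; rewrite /dmx mul_diag_mx !mxE.
by case: (i == j); rewrite ?mulr1n ?mulr0n ?mulr0.
Qed.

Lemma dmx1 (R : ringType) m : dmx (fun _ => 1) = 1%:M :> 'M[R]_m.
Proof. by apply/matrixP => i j; rewrite /dmx !mxE. Qed.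

Section ConjugateDiagonal.
Variables (F : fieldType) (n : nat).
Local Notation N := n.+1.
Variable P : 'M[F]_N.
Hypothesis P_unit : P \in unitmx.

Lemma conjmxM (X Y : 'M[F]_N) :
  (invmx P *m X *m P) *m (invmx P *m Y *m P) = invmx P *m (X *m Y) *m P.
Proof. by rewrite !mulmxA (mulmxK P_unit) -!mulmxA. Qed.

Lemma conjmx_inj (X Y : 'M[F]_N) : invmx P *m X *m P = invmx P *m Y *m P -> X = Y.
Proof.
move=> /(congr1 (fun Z => P *m Z *m invmx P)).
by rewrite !mulmxA (mulmxV P_unit) !mul1mx !(mulmxK P_unit).
Qed.

Lemma conj_dmxX (lam : 'I_N -> F) k :
  (invmx P *m dmx lam *m P) ^+ k = invmx P *m dmx (fun i => lam i ^+ k) *m P.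
Proof.
elim: k => [|k IH].
  by rewrite expr0 (_ : (fun i => _) = fun _ => 1) ?dmx1 ?mulmx1 ?mulVmx.
rewrite exprS IH [_ * _]conjmxM // dmxM; congr (_ *m dmx _ *m _).
by apply: functional_extensionality => i; rewrite exprS.
Qed.

Lemma conj_dmx_finite_order (lam : 'I_N -> F) :
  (forall i, exists2 m, (0 < m)%N & lam i ^+ m = 1) ->
  exists m, (0 < m)%N /\ (invmx P *m dmx lam *m P) ^+ m = 1.
Proof.
move=> roots.
have rootsb i : exists m, (0 < m)%N && (lam i ^+ m == 1).
  by have [m m0 lam_m] := roots i; exists m; rewrite m0 lam_m eqxx.
have [ord ordP] := fin_all_exists rootsb.
exists (\prod_i ord i)%N; split; first by rewrite prodn_gt0 // => i; case/andP: (ordP i).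
rewrite conj_dmxX (_ : (fun i => _) = fun _ => 1) ?dmx1 ?mulmx1 ?mulVmx //.
apply: functional_extensionality => i; rewrite (bigD1 i) //= exprM.
by case/andP: (ordP i) => _ /eqP ->; rewrite expr1n.
Qed.

Lemma conj_dmx_commute (lam mu : 'I_N -> F) (Y : 'M[F]_N) :
  (forall i j, lam i = lam j -> mu i = mu j) ->
  Y *m (invmx P *m dmx lam *m P) = (invmx P *m dmx lam *m P) *m Y ->
  Y *m (invmx P *m dmx mu *m P) = (invmx P *m dmx mu *m P) *m Y.
Proof.
move=> lam_mu; have [Y' ->] : exists Y', Y = invmx P *m Y' *m P.
  by exists (P *m Y *m invmx P); rewrite !mulmxA (mulVmx P_unit) mul1mx (mulmxKV P_unit).
rewrite !conjmxM // => /conjmx_inj Y'lam; congr (_ *m _ *m _); apply/matrixP => i j.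
move/matrixP: Y'lam => /(_ i j); rewrite /dmx !mul_mx_diag !mul_diag_mx !mxE.
have [-> _|Yij] := eqVneq (Y' i j) 0; first by rewrite mulr0 mul0r.
by rewrite [lam i * _]mulrC => /(mulfI Yij) /lam_mu ->; rewrite mulrC.
Qed.

Lemma conj_dmx_eq1 (mu : 'I_N -> F) : invmx P *m dmx mu *m P = 1%:M -> forall i, mu i = 1.
Proof.
move=> mu1 i; have : dmx mu = 1%:M.
  by apply: conjmx_inj; rewrite mu1 mulmx1 mulVmx.
by move/matrixP => /(_ i i); rewrite dmxE !mxE eqxx.
Qed.

End ConjugateDiagonal.

Definition mult_compatible (R : ringType) m (lam mu : 'I_m -> R) :=
  forall a b : 'I_m -> nat,
  \prod_i lam i ^+ a i = \prod_i lam i ^+ b i -> \prod_i mu i ^+ a i = \prod_i mu i ^+ b i.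

Lemma prodr_expr_delta (R : comRingType) m (x : 'I_m -> R) i :
  \prod_k x k ^+ (k == i) = x i.
Proof. by rewrite (bigD1 i) //= eqxx big1 ?mulr1 // => k /negPf ->. Qed.

Lemma mult_compatible_eq (R : comRingType) m (lam mu : 'I_m -> R) i j :
  mult_compatible lam mu -> lam i = lam j -> mu i = mu j.
Proof.
move=> compat lam_ij.
have := compat (fun k => (k == i) : nat) (fun k => (k == j) : nat).
by rewrite !prodr_expr_delta; apply.
Qed.

Lemma sum_ord_trunc (V : nmodType) (f : nat -> V) a b :
  (forall i, (a <= i)%N -> f i = 0) -> (forall i, (b <= i)%N -> f i = 0) ->
  \sum_(i < a) f i = \sum_(i < b) f i.
Proof.
wlog ab : a b / (a <= b)%N.
  by move=> wlog_ab fa fb; case: (leqP a b) => [|/ltnW] ab; [|symmetry]; apply: wlog_ab.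
move=> fa _; rewrite -!(big_mkord xpredT) (big_cat_nat (leq0n a) ab) /=.
by rewrite [X in _ = _ + X]big_nat_cond [X in _ = _ + X]big1 ?addr0 // => i /andP[/andP[/fa]].
Qed.

Lemma unipotent_exprn (R : ringType) (W : R) M k : W ^+ M = 0 ->
  (W + 1) ^+ k = \sum_(l < M) W ^+ l *+ 'C(k, l).
Proof.
move=> WM; rewrite exprD1n; apply: (@sum_ord_trunc _ (fun l => W ^+ l *+ 'C(k, l))) => l lb.
  by rewrite bin_small.
by rewrite -(subnK lb) exprD WM mulr0 mul0rn.
Qed.

Section PowersClosure.
Variables (F : closedFieldType) (n : nat).
Local Notation N := n.+1.
Variables (P W : 'M[F]_N) (M : nat).

Definition jordan_mx (mu : 'I_N -> F) (z : 'I_M.+1 -> F) : 'M[F]_N :=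
  invmx P *m dmx mu *m P *m \sum_(l < M.+1) z l *: W ^+ l.

Lemma mx_eval_jordan_mx (p : {mpoly F[N * N]}) : exists q : {mpoly F[N + M.+1]},
  forall mu z, mx_eval p (jordan_mx mu z) =
    \sum_(m <- msupp q)
      \prod_i mu i ^+ m (lshift M.+1 i) * (q@_m * \prod_j z j ^+ m (rshift N j)).
Proof.
pose jordan_split (v : 'I_(N + M.+1) -> F) :=
  jordan_mx (fun i => v (lshift M.+1 i)) (fun l => v (rshift N l)).
have [q qE] : polyfun id (fun v => mx_eval p (jordan_split v)).
  apply: polyfun_mx_eval; apply: polyfun_mxM.
    apply: polyfun_mxM; last exact: polyfun_mx_cst.
    apply: polyfun_mxM; first exact: polyfun_mx_cst.
    by apply: polyfun_mx_diag => i; apply: polyfun_var.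
  by apply: polyfun_mx_sum => l; apply: polyfun_mxZ; [apply: polyfun_var | apply: polyfun_mx_cst].
exists q => mu z.
pose v i := match split i with inl a => mu a | inr b => z b end.
have vl i : v (lshift M.+1 i) = mu i by rewrite /v (unsplitK (inl i)).
have vr j : v (rshift N j) = z j by rewrite /v (unsplitK (inr j)).
have -> : jordan_mx mu z = jordan_split v.
  by rewrite /jordan_split; congr jordan_mx; apply: functional_extensionality.
rewrite qE mevalE; apply: eq_bigr => m _.
rewrite big_split_ord /= mulrCA; under eq_bigr do rewrite vl.
by under [X in _ * (_ * X)]eq_bigr do rewrite vr.
Qed.

Variable lam : 'I_N -> F.
Hypothesis lam_neq0 : forall i, lam i != 0.

(* Along k, p (jordan_mx (lam^k) (binomials in k)) = \sum_v v^k R_v(k), where v runs over the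
   values prod_i lam_i^(a_i) of the monomials and R_v has nilpotent differences.  So every R_v
   vanishes, in particular at k = 0, and a compatible mu is constant on each class. *)
Lemma mx_eval_powers_compatible (p : {mpoly F[N * N]}) :
  (forall k, mx_eval p (jordan_mx (fun i => lam i ^+ k) (fun l => ('C(k, l))%:R)) = 0) ->
  forall mu, mult_compatible lam mu -> mx_eval p (invmx P *m dmx mu *m P) = 0.
Proof.
move=> p_powers mu compat_mu.
have [q expand] := mx_eval_jordan_mx p.
pose val (m : 'X_{1.. N + M.+1}) := \prod_i lam i ^+ m (lshift M.+1 i).
pose coef (m : 'X_{1.. N + M.+1}) k :=
  q@_m * \prod_(j < M.+1) ('C(k, j))%:R ^+ m (rshift N j).
pose R v k := \sum_(m <- msupp q | val m == v) coef m k.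
have R0 : forall v, v \in undup (map val (msupp q)) -> forall k, R v k = 0.
  apply: exp_poly_coef_eq0; first exact: undup_uniq.
  - move=> v; rewrite mem_undup => /mapP [m _ ->].
    by apply/prodf_neq0 => i _; rewrite expf_neq0.
  - move=> v _; apply: fdiff_nil_sum => m; apply: fdiff_nilM; first exact: fdiff_nil_cst.
    by apply: fdiff_nil_prod => j; apply/fdiff_nilX/fdiff_nil_binomial.
  move=> k; apply: etrans (p_powers k); rewrite expand (big_partition_undup _ _ val).
  apply: eq_bigr => v _; rewrite mulr_sumr; apply: eq_big => // m /eqP <-.
  rewrite /val -prodrXl; congr (_ * _); apply: eq_bigr => i _.
  by rewrite exprAC.
have -> : invmx P *m dmx mu *m P = jordan_mx mu (fun l => ('C(0, l))%:R).
  rewrite /jordan_mx big_ord_recl big1 => [|l _]; last by rewrite bin0n scale0r.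
  by rewrite bin0 scale1r expr0 addr0 mulmx1.
rewrite expand (big_partition_undup _ _ val) big_seq big1 // => v.
rewrite mem_undup => /mapP [m0 m0q ->].
rewrite (eq_bigr (fun m => \prod_i mu i ^+ m0 (lshift M.+1 i) * coef m 0%N)); last first.
  by move=> m /eqP /compat_mu ->.
have m0V : val m0 \in undup (map val (msupp q)) by rewrite mem_undup map_f.
by rewrite -mulr_sumr; move: (R0 _ m0V 0%N); rewrite /R => ->; rewrite mulr0.
Qed.

End PowersClosure.

Arguments jordan_mx {F n} P W M mu z.

Lemma prodfXzl (F : fieldType) (I : Type) (r : seq I) (x : I -> F) (a : int) :
  \prod_(i <- r) x i ^ a = (\prod_(i <- r) x i) ^ a.
Proof.
elim: r => [|i r IH]; first by rewrite !big_nil exp1rz.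
by rewrite !big_cons IH expfzMl.
Qed.

Lemma prodfXzr (F : fieldType) (t : F) (I : Type) (r : seq I) (z : I -> int) : t != 0 ->
  \prod_(i <- r) t ^ z i = t ^ (\sum_(i <- r) z i).
Proof.
move=> t0; elim: r => [|a r IH]; first by rewrite !big_nil expr0z.
by rewrite !big_cons IH expfzDr.
Qed.

Lemma int_orthogonal_exists N (S : 'M[rat]_N) : (\rank S < N)%N ->
  exists2 c : 'I_N -> int, (exists j, c j != 0) &
    forall x : 'rV[rat]_N, (x <= S)%MS -> \sum_i (c i)%:~R * x 0 i = 0.
Proof.
move=> rkS; have kerS_neq0 : kermx S^T != 0.
  by rewrite -mxrank_eq0 mxrank_ker mxrank_tr subn_eq0 -ltnNge.
have [i [j wij]] : exists i j, kermx S^T i j != 0.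
  apply: NNPP => all0; move/negP: kerS_neq0; apply; apply/eqP/matrixP => i j.
  rewrite [RHS]mxE; apply: NNPP => ij; apply: all0; exists i, j; exact/eqP.
pose w := row i (kermx S^T).
have w_orth x : (x <= S)%MS -> \sum_k x 0 k * w 0 k = 0.
  move=> /submxP [y ->].
  have : y *m S *m w^T = 0.
    by rewrite -mulmxA -[S]trmxK -trmx_mul -row_mul mulmx_ker row0 trmx0 mulmx0.
  move/matrixP => /(_ 0 0); rewrite !mxE => xw0; apply: etrans xw0.
  by apply: eq_bigr => k _; rewrite !mxE.
pose c k := numq (w 0 k) * \prod_(l | l != k) denq (w 0 l).
have cE k : (c k)%:~R = w 0 k * \prod_l ((denq (w 0 l))%:~R : rat).
  rewrite /c intrM numqE [in RHS](bigD1 k) //= -mulrA; congr (_ * _).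
  by rewrite rmorph_prod.
exists c => [|x xS].
  exists j; rewrite /c mulf_neq0 //; first by rewrite numq_eq0 /w mxE.
  by apply/prodf_neq0 => l _; rewrite denq_neq0.
under eq_bigr do rewrite cE mulrC mulrA.
by rewrite -mulr_suml w_orth // mul0r.
Qed.

Section MultiplicativeRelations.
Variables (F : fieldType) (N : nat) (lam : 'I_N -> F).
Hypothesis lam_neq0 : forall i, lam i != 0.

Definition mult_relation (d : 'I_N -> int) := \prod_i lam i ^ d i = 1.

Lemma mult_relation_lin d d' a b : mult_relation d -> mult_relation d' ->
  mult_relation (fun i => a * d i + b * d' i).
Proof.
rewrite /mult_relation => rel_d rel_d'.
under eq_bigr do rewrite expfzDr // [a * _]mulrC [b * _]mulrC -!exprz_exp.
by rewrite big_split /= !prodfXzl rel_d rel_d' !exp1rz mulr1.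
Qed.

Lemma mult_relation0 : mult_relation (fun _ => 0).
Proof. by rewrite /mult_relation big1. Qed.

Definition rat_row (d : 'I_N -> int) : 'rV[rat]_N := \row_i (d i)%:~R.

Definition relation_subspace (S : 'M[rat]_N) := forall x : 'rV[rat]_N, (x <= S)%MS ->
  exists2 K : int, K != 0 & exists2 d, mult_relation d & K%:~R *: x = rat_row d.

Lemma relation_subspace0 : relation_subspace 0.
Proof.
move=> x; rewrite submx0 => /eqP ->; exists 1 => //.
exists (fun _ => 0); first exact: mult_relation0.
by apply/rowP => i; rewrite !mxE mulr0.
Qed.

Lemma relation_subspaceD S d0 : relation_subspace S -> mult_relation d0 ->
  relation_subspace (S + rat_row d0)%MS.
Proof.
move=> relS rel_d0 x /sub_addsmxP [u ->].
have [K K0 [d rel_d Kd]] := relS (u.1 *m S) (submxMl _ _).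
set a := u.2 0 0.
have u2E : u.2 *m rat_row d0 = a *: rat_row d0 by rewrite [u.2]mx11_scalar mul_scalar_mx.
exists (K * denq a); first by rewrite mulf_neq0 ?denq_neq0.
exists (fun i => denq a * d i + (K * numq a) * d0 i); first exact: mult_relation_lin.
rewrite u2E scalerDr intrM [K%:~R * _]mulrC -scalerA Kd.
by apply/rowP => i; rewrite !mxE intrD !intrM numqE; ring.
Qed.

(* The rank bound N forbids an infinite strictly increasing chain of relation subspaces. *)
Lemma relation_span_exists :
  exists2 S, relation_subspace S & forall d, mult_relation d -> (rat_row d <= S)%MS.
Proof.
apply: NNPP => no_span.
have grow S : relation_subspace S -> exists2 d, mult_relation d & ~~ (rat_row d <= S)%MS.
  move=> relS; apply: NNPP => no_d; apply: no_span; exists S => // d rel_d.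
  by apply: NNPP => dS; apply: no_d; exists d => //; apply/negP.
have rank_unbounded k : exists2 S, relation_subspace S & (k <= \rank S)%N.
  elim: k => [|k [S relS kS]]; first by exists 0 => //; exact: relation_subspace0.
  have [d rel_d dS] := grow S relS.
  exists (S + rat_row d)%MS; first exact: relation_subspaceD.
  apply: leq_ltn_trans kS _; have [le_rk eq_rk] := mxrank_leqif_sup (addsmxSl S (rat_row d)).
  rewrite ltn_neqAle le_rk andbT eq_rk; apply: contra dS; apply: submx_trans.
  exact: addsmxSr.
have [S _ rkS] := rank_unbounded N.+1.
by have := rank_leq_col S; rewrite leqNgt rkS.
Qed.

Lemma delta_notin_relation_subspace S (j0 : 'I_N) : relation_subspace S ->
  ~ (exists2 m, (0 < m)%N & lam j0 ^+ m = 1) ->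
  ~~ submx (rat_row (fun i => ((i == j0) : nat)%:Z)) S.
Proof.
move=> relS j0_not_root; apply/negP => /relS [K K0 [d rel_d Kd]].
have dE i : d i = K * ((i == j0) : nat)%:Z.
  by move/rowP: Kd => /(_ i); rewrite !mxE => /eqP; rewrite -intrM eqr_int => /eqP <-.
move: rel_d; rewrite /mult_relation (bigD1 j0) //= big1 => [|i ij]; last first.
  by rewrite dE (negPf ij) mulr0 expr0z.
rewrite mulr1 dE eqxx mulr1.
case: K K0 {Kd dE} => m K0 lam_m.
  by apply: j0_not_root; exists m; rewrite // lt0n; apply: contra K0 => /eqP ->.
move: lam_m; rewrite NegzE -exprnN => /eqP; rewrite invr_eq1 => /eqP lam_m.
by apply: j0_not_root; exists m.+1.
Qed.

Lemma orthogonal_to_relations (j0 : 'I_N) :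
  ~ (exists2 m, (0 < m)%N & lam j0 ^+ m = 1) ->
  exists2 c : 'I_N -> int, (exists j, c j != 0) &
    forall d, mult_relation d -> \sum_i c i * d i = 0.
Proof.
move=> j0_not_root; have [S relS spanS] := relation_span_exists.
have rkS : (\rank S < N)%N.
  rewrite ltn_neqAle rank_leq_col andbT.
  by apply: contra (delta_notin_relation_subspace relS j0_not_root) => /submx_full; apply.
have [c c_neq0 c_orth] := int_orthogonal_exists rkS.
exists c => // d /spanS /c_orth cd0; apply: (@intr_inj rat); rewrite rmorph_sum rmorph0.
by apply: etrans cd0; apply: eq_bigr => i _; rewrite rmorphM mxE.
Qed.

End MultiplicativeRelations.

Lemma prod_exprz_exprn (F : fieldType) m (t : F) (c : 'I_m -> int) (a : 'I_m -> nat) : t != 0 ->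
  \prod_i (t ^ c i) ^+ a i = t ^ (\sum_i c i * (a i)%:Z).
Proof.
move=> t0; rewrite -prodfXzr //; apply: eq_bigr => i _.
by rewrite -[(t ^ c i) ^+ a i]/((t ^ c i) ^ (Posz (a i))) exprz_exp.
Qed.

Lemma orthogonal_exponents_compatible (F : fieldType) m (lam : 'I_m -> F) (c : 'I_m -> int)
    (t : F) : (forall i, lam i != 0) ->
  (forall d, mult_relation lam d -> \sum_i c i * d i = 0) -> t != 0 ->
  mult_compatible lam (fun i => t ^ c i).
Proof.
move=> lam_neq0 c_orth t0 a b lam_ab.
have rel_ab : mult_relation lam (fun i => (a i)%:Z - (b i)%:Z).
  rewrite /mult_relation; under eq_bigr do rewrite expfzDr // -invr_expz.
  by rewrite prodf_div lam_ab divff //; apply/prodf_neq0 => i _; rewrite expf_neq0.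
move: (c_orth _ rel_ab) => /=; under eq_bigr do rewrite mulrBr.
by rewrite sumrB => /eqP; rewrite subr_eq0 !prod_exprz_exprn // => /eqP ->.
Qed.

Lemma closed_poly_eq0 (F : closedFieldType) (Q : {poly F}) : (forall x, Q.[x] = 0) -> Q = 0.
Proof.
move=> Q_roots; apply: NNPP => /eqP Q0.
have size_XQ1 : size (1 + 'X * Q) != 1.
  rewrite addrC size_polyDl mulrC size_mulX // ?size_poly1; first by rewrite eqSS size_poly_eq0.
  by rewrite ltnS lt0n size_poly_eq0.
have [x] := closed_rootP _ size_XQ1.
by rewrite /root hornerD hornerC mulrC hornerMX Q_roots mul0r addr0 oner_eq0.
Qed.

Lemma exists_exprz_neq1 (F : closedFieldType) (z : int) :
  z != 0 -> exists2 t : F, t != 0 & t ^ z != 1.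
Proof.
move=> z0; apply: NNPP => all1.
have tz (t : F) : t != 0 -> t ^+ `|z| = 1.
  move=> t0; have : t ^ z = 1 by apply: NNPP => tz; apply: all1; exists t => //; apply/eqP.
  by clear all1; case: z z0 => m //= _; rewrite NegzE -exprnN => /eqP; rewrite invr_eq1 => /eqP.
have : 'X * ('X^`|z| - 1) = 0 :> {poly F}.
  apply: closed_poly_eq0 => x; rewrite hornerM hornerX.
  have [->|x0] := eqVneq x 0; first by rewrite mul0r.
  by rewrite hornerD hornerXn hornerN hornerC tz // subrr mulr0.
apply/eqP; rewrite mulf_neq0 ?polyX_eq0 //; apply/eqP => /(congr1 (horner^~ 0)).
by rewrite hornerD hornerXn hornerN hornerC horner0 expr0n absz_eq0 (negPf z0) sub0r => /eqP;
  rewrite oppr_eq0 oner_eq0.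
Qed.

Section Cocharacter.
Variables (F : closedFieldType) (n : nat).
Local Notation N := n.+1.
Variables (P : 'M[F]_N) (c : 'I_N -> int).
Hypothesis P_unit : P \in unitmx.

Definition cochar (t : F) := invmx P *m dmx (fun i => t ^ c i) *m P.

Definition cochar_image : mset F n := fun B => exists2 t, t != 0 & B = cochar t.

Lemma cocharM t s : t != 0 -> s != 0 -> cochar t *m cochar s = cochar (t * s).
Proof.
move=> t0 s0; rewrite /cochar (conjmxM P_unit) dmxM; congr (_ *m dmx _ *m _).
by apply: functional_extensionality => i; rewrite expfzMl.
Qed.

Lemma cochar1 : cochar 1 = 1%:M.
Proof.
rewrite /cochar (_ : (fun i => 1 ^ c i) = fun _ => 1); last first.
  by apply: functional_extensionality => i; rewrite exp1rz.
by rewrite dmx1 mulmx1 mulVmx.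
Qed.

Lemma cocharV t : t != 0 -> cochar t *m cochar t^-1 = 1%:M.
Proof. by move=> t0; rewrite cocharM ?invr_eq0 // mulfV // cochar1. Qed.

Lemma cochar_unit t : t != 0 -> cochar t \in unitmx.
Proof. by move=> t0; case: (mulmx1_unit (cocharV t0)). Qed.

Lemma invmx_cochar t : t != 0 -> invmx (cochar t) = cochar t^-1.
Proof.
move=> t0; rewrite -[RHS]mul1mx -(mulVmx (cochar_unit t0)) -mulmxA cocharV //.
by rewrite mulmx1.
Qed.

Lemma cochar_image_unit B : cochar_image B -> B \in unitmx.
Proof. by case=> t t0 ->; apply: cochar_unit. Qed.

Lemma cochar_image1 : cochar_image 1.
Proof. by exists 1; rewrite ?oner_eq0 // cochar1. Qed.

Lemma cochar_imageM A B : cochar_image A -> cochar_image B -> cochar_image (A *m B).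
Proof. by move=> [t t0 ->] [s s0 ->]; exists (t * s); rewrite ?mulf_neq0 ?cocharM. Qed.

Lemma cochar_imageV A : cochar_image A -> cochar_image (invmx A).
Proof. by move=> [t t0 ->]; exists t^-1; rewrite ?invr_eq0 ?invmx_cochar. Qed.

Lemma cochar_eq1 t : cochar t = 1%:M -> forall i, t ^ c i = 1.
Proof. exact: (conj_dmx_eq1 P_unit). Qed.

Lemma mx_eval_cochar (p : {mpoly F[N * N]}) : exists (Q : {poly F}) (K : nat),
  forall t, t != 0 -> Q.[t] = t ^+ K * mx_eval p (cochar t).
Proof.
have [q qE] : polyfun id (fun mu => mx_eval p (invmx P *m dmx mu *m P)).
  apply: polyfun_mx_eval; apply: polyfun_mxM; last exact: polyfun_mx_cst.
  apply: polyfun_mxM; first exact: polyfun_mx_cst.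
  by apply: polyfun_mx_diag => i; apply: polyfun_var.
pose e (m : 'X_{1.. N}) := \sum_i c i * (m i)%:Z.
pose K := \max_(m <- msupp q) `|e m|%N.
have eK m : m \in msupp q -> (0 <= e m + K%:Z)%R.
  move=> mq; have : (`|e m| <= K)%N by apply: (@leq_bigmax_seq _ _ xpredT (fun m => `|e m|%N) m mq).
  lia.
exists (\sum_(m <- msupp q) q@_m *: 'X^(absz (e m + K%:Z))), K => t t0.
rewrite qE mevalE horner_sum mulr_sumr big_seq [RHS]big_seq; apply: eq_bigr => m mq.
rewrite hornerZ hornerXn mulrCA; congr (_ * _).
rewrite -[t ^+ _]/(t ^ (Posz (absz (e m + K%:Z)))) gez0_abs ?eK // expfzDr // mulrC.
by rewrite prod_exprz_exprn.
Qed.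

Lemma zariski_closed_cochar (C : mset F n) : zariski_closed C ->
  (forall t, t != 0 -> C (cochar t)) \/
  exists2 Q : {poly F}, Q != 0 & forall t, t != 0 -> C (cochar t) -> Q.[t] = 0.
Proof.
move=> [_ [S CS]].
case: (classic (exists p, S p /\ exists2 t0, t0 != 0 & mx_eval p (cochar t0) != 0)).
  move=> [p [Sp [t0 t00 pt0]]]; right; have [Q [K QE]] := mx_eval_cochar p.
  exists Q => [|t t_neq0 Ct]; last first.
    by rewrite QE // (CS _ (cochar_unit t_neq0)).1 ?mulr0.
  apply/eqP => Q0; move: (QE t0 t00); rewrite Q0 horner0 => /esym /eqP.
  by rewrite mulf_eq0 expf_eq0 (negPf t00) andbF (negPf pt0).
move=> no_p; left => t t0; apply/(CS _ (cochar_unit t0)) => p Sp.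
by apply: NNPP => pt; apply: no_p; exists p; split => //; exists t => //; apply/eqP.
Qed.

(* A closed set not containing the whole image meets it in the roots of a nonzero polynomial,
   and F is infinite. *)
Lemma cochar_image_connected : zariski_connected cochar_image.
Proof.
move=> [C1 [C2 [[cl1 cl2] cover [x1 [T1 C1x]] [x2 [T2 C2x]] disj]]].
case: (zariski_closed_cochar cl1) => [all1|[Q1 Q1_neq0 Q1_root]].
  by case: (T2) => t t0 x2E; apply: (disj x2) => //; rewrite x2E; apply: all1.
case: (zariski_closed_cochar cl2) => [all2|[Q2 Q2_neq0 Q2_root]].
  by case: (T1) => t t0 x1E; apply: (disj x1) => //; rewrite x1E; apply: all2.
have : 'X * Q1 * Q2 = 0.
  apply: closed_poly_eq0 => x; rewrite !hornerM hornerX.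
  have [->|x0] := eqVneq x 0; first by rewrite !mul0r.
  have [Cx|Cx] := cover _ (ex_intro2 _ _ x x0 erefl).
    by rewrite Q1_root // mulr0 mul0r.
  by rewrite Q2_root // mulr0.
by apply/eqP; rewrite !mulf_neq0 // polyX_eq0.
Qed.

End Cocharacter.

Section ZariskiClosure.
Variables (F : closedFieldType) (n : nat).
Local Notation N := n.+1.
Local Notation mx_coords := (fun (B : 'M[F]_N) (i : 'I_(N * N)) => mxvec B 0 i).

Lemma polyfun_mx_id : polyfun_mx mx_coords (fun B : 'M[F]_N => B).
Proof.
by move=> i j; apply: polyfun_ext (polyfun_var _ (mxvec_index i j)) _ => B; rewrite mxvecE.
Qed.

Lemma polyfun_mx_coords (f : 'M[F]_N -> F) :
  polyfun mx_coords f -> exists p, forall B, f B = mx_eval p B.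
Proof. by move=> [p pE]; exists p. Qed.

Lemma polyfun_mx_eval_comp (H : 'M[F]_N -> 'M[F]_N) (p : {mpoly F[N * N]}) :
  polyfun_mx mx_coords H -> exists p', forall B, mx_eval p (H B) = mx_eval p' B.
Proof. by move=> pH; apply/polyfun_mx_coords/polyfun_mx_eval. Qed.

(* Clearing the denominator det B of invmx B = \adj B / \det B. *)
Lemma mx_eval_invmx (p : {mpoly F[N * N]}) : exists K : nat, exists p',
  forall B, B \in unitmx -> mx_eval p' B = \det B ^+ K * mx_eval p (invmx B).
Proof.
pose K := \max_(m <- msupp p) mdeg m.
have degK m : m \in msupp p -> (mdeg m <= K)%N.
  by move=> mp; apply: (@leq_bigmax_seq _ _ xpredT mdeg m mp).
pose f (B : 'M[F]_N) := \sum_(m <- msupp p)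
  p@_m * (\det B ^+ (K - mdeg m) * \prod_i (mxvec (\adj B) 0 i) ^+ m i).
have [p' p'E] : exists p', forall B, f B = mx_eval p' B.
  apply: polyfun_mx_coords; apply: polyfun_sum => m; apply: polyfunM; first exact: polyfun_cst.
  apply: polyfunM; first by apply/polyfunX/polyfun_det/polyfun_mx_id.
  by apply: polyfun_prod => i; apply/polyfunX/polyfun_mxvec/polyfun_adj/polyfun_mx_id.
exists K, p' => B Bu; rewrite -p'E /f /mx_eval mevalE mulr_sumr big_seq [RHS]big_seq.
apply: eq_bigr => m mp.
have detB0 : \det B != 0 by rewrite -unitfE -unitmxE.
have detK : \det B ^+ K * (\det B)^-1 ^+ mdeg m = \det B ^+ (K - mdeg m).
  by rewrite -{1}(subnK (degK m mp)) exprD -mulrA -exprMn mulfV // expr1n mulr1.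
rewrite /invmx Bu; under [in RHS]eq_bigr do rewrite linearZ mxE exprMn.
by rewrite big_split /= prodrXr -mdegE -detK [RHS]mulrCA; congr (_ * _); rewrite mulrA.
Qed.

Variable T : mset F n.
Hypotheses (T_unit : forall A, T A -> A \in unitmx)
  (TM : forall A B, T A -> T B -> T (A *m B)) (TV : forall A, T A -> T (invmx A))
  (T_connected : zariski_connected T).

Definition zcl : mset F n := fun B =>
  B \in unitmx /\ forall p, (forall A, T A -> mx_eval p A = 0) -> mx_eval p B = 0.

Lemma sub_zcl A : T A -> zcl A.
Proof. by move=> TA; split; [apply: T_unit | move=> p; apply]. Qed.

Lemma zcl_closed : zariski_closed zcl.
Proof.
split=> [A []//|]; exists (fun p => forall A, T A -> mx_eval p A = 0) => A Au.
by split=> [[]//|]; split.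
Qed.

Lemma zcl_min (C : mset F n) : zariski_closed C -> (forall A, T A -> C A) ->
  forall B, zcl B -> C B.
Proof.
move=> [_ [S CS]] TC B [Bu zB]; apply/(CS _ Bu) => p Sp; apply: zB => A TA.
exact: (CS _ (T_unit TA)).1 (TC A TA) p Sp.
Qed.

(* B |-> p (x *m B) is again a polynomial, vanishing on T since x T is contained in T. *)
Lemma zcl_mulT x B : T x -> zcl B -> zcl (x *m B).
Proof.
move=> Tx [Bu zB]; split; first by rewrite unitmx_mul T_unit.
move=> p pT; have [p' p'E] := @polyfun_mx_eval_comp (mulmx x) p
  (polyfun_mxM (polyfun_mx_cst _ _) polyfun_mx_id).
by rewrite p'E; apply: zB => A TA; rewrite -p'E; apply/pT/TM.
Qed.

Lemma zclM A B : zcl A -> zcl B -> zcl (A *m B).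
Proof.
move=> [Au zA] zB; split; first by rewrite unitmx_mul Au; case: zB.
move=> p pT; have [p' p'E] := @polyfun_mx_eval_comp (mulmx^~ B) p
  (polyfun_mxM polyfun_mx_id (polyfun_mx_cst _ _)).
rewrite p'E; apply: zA => C TC; rewrite -p'E.
by case: (zcl_mulT TC zB) => _; apply.
Qed.

Lemma zclV B : zcl B -> zcl (invmx B).
Proof.
move=> [Bu zB]; split; first by rewrite unitmx_inv.
move=> p pT; have [K [p' p'E]] := mx_eval_invmx p.
have detB0 : \det B != 0 by rewrite -unitfE -unitmxE.
have : mx_eval p' B = 0 by apply: zB => A TA; rewrite p'E ?T_unit // pT ?mulr0 //; apply: TV.
by rewrite p'E // => /eqP; rewrite mulf_eq0 expf_eq0 (negPf detB0) andbF => /eqP.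
Qed.

Lemma zcl_connected : zariski_connected zcl.
Proof.
move=> [C1 [C2 [[cl1 cl2] cover [x1 [zx1 C1x]] [x2 [zx2 C2x]] disj]]].
have coverT A : T A -> C1 A \/ C2 A by move/sub_zcl/cover.
apply: T_connected; exists C1, C2; split => //.
- apply: NNPP => no1; apply: (disj x1) => //; apply: (zcl_min cl2) => // A TA.
  by case: (coverT A TA) => // C1A; case: no1; exists A.
- apply: NNPP => no2; apply: (disj x2) => //; apply: (zcl_min cl1) => // A TA.
  by case: (coverT A TA) => // C2A; case: no2; exists A.
- by move=> x /sub_zcl; apply: disj.
Qed.

Lemma zcl_centralizes (y : 'M[F]_N) : (forall A, T A -> A *m y = y *m A) ->
  forall B, zcl B -> B *m y = y *m B.
Proof.
move=> Ty B [_ zB]; apply/matrixP => i j; apply/eqP; rewrite -subr_eq0; apply/eqP.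
have [p pE] : exists p, forall B, (B *m y) i j - (y *m B) i j = mx_eval p B.
  apply: polyfun_mx_coords; apply: polyfunB.
    exact: polyfun_mxM polyfun_mx_id (polyfun_mx_cst _ _) i j.
  exact: polyfun_mxM (polyfun_mx_cst _ _) polyfun_mx_id i j.
by rewrite pE; apply: zB => A TA; rewrite -pE Ty // subrr.
Qed.

End ZariskiClosure.

Lemma subgroupX (F : closedFieldType) n (G : mset F n) g :
  is_subgroup G -> G g -> forall k, G (g ^+ k).
Proof. by move=> [G1 GM _] Gg; elim => [|k IH]; rewrite ?expr0 // exprS; apply: GM. Qed.

Section IsolatedElements.
Variables (F : closedFieldType) (n : nat).
Local Notation N := n.+1.
Local Notation M := 'M[F]_N.

Lemma diagonalizable_conj_dmx (s : M) : s \in unitmx -> diagonalizable s ->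
  exists P, exists2 lam : 'I_N -> F,
    P \in unitmx /\ (forall i, lam i != 0) & s = invmx P *m dmx lam *m P.
Proof.
move=> s_unit [P P_unit]; rewrite /similar_to conjumx // => Pdiag.
pose lam i := (P *m s *m invmx P) i i.
have dmxE' : dmx lam = P *m s *m invmx P.
  apply/matrixP => i j; rewrite dmxE; have [<-|ij] := eqVneq i j; first by rewrite mulr1n.
  rewrite mulr0n; apply/esym; move/is_diag_mxP: Pdiag; apply.
  by apply: contra ij => /eqP /val_inj ->.
exists P, lam; last by rewrite dmxE' !mulmxA (mulVmx P_unit) mul1mx (mulmxKV P_unit).
split=> // i; have : dmx lam \in unitmx by rewrite dmxE' !unitmx_mul P_unit s_unit unitmx_inv.
rewrite unitmxE /dmx det_diag unitfE => /prodf_neq0 /(_ i isT).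
by rewrite mxE.
Qed.

Lemma jordan_mx_exp (P : M) (lam : 'I_N -> F) (s u : M) K :
  P \in unitmx -> s = invmx P *m dmx lam *m P -> s * u = u * s -> (u - 1) ^+ K = 0 ->
  forall k, (s * u) ^+ k =
    jordan_mx P (u - 1) K (fun i => lam i ^+ k) (fun l => ('C(k, l))%:R).
Proof.
move=> P_unit sE su uK k; rewrite exprMn_comm // {1}sE conj_dmxX // -[u](subrK 1).
rewrite (@unipotent_exprn _ _ K.+1) ?exprS ?uK ?mulr0 // addrK; congr (_ *m _).
by apply: eq_bigr => l _; rewrite scaler_nat.
Qed.

Lemma closed_powers_cochar (G : mset F n) (g P W : M) K (lam : 'I_N -> F) (c : 'I_N -> int) :
  zariski_closed G -> (forall k, G (g ^+ k)) -> P \in unitmx -> (forall i, lam i != 0) ->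
  (forall k, g ^+ k = jordan_mx P W K (fun i => lam i ^+ k) (fun l => ('C(k, l))%:R)) ->
  (forall t, t != 0 -> mult_compatible lam (fun i => t ^ c i)) ->
  forall A, cochar_image P c A -> G A.
Proof.
move=> [G_unit [S GS]] G_pow P_unit lam_neq0 gE compat _ [t t0 ->].
apply/(GS _ (cochar_unit c P_unit t0)) => p Sp.
apply: (mx_eval_powers_compatible (W := W) (M := K) lam_neq0) (compat t t0) => k.
by rewrite -gE; apply: (GS _ (G_unit _ (G_pow k))).1.
Qed.

Lemma isolated_center (G : mset F n) (g s u : M) (T : mset F n) :
  isolated G g s u -> zariski_connected T -> T 1 -> (forall A, T A -> G A) ->
  u * s = s * u -> (forall A Y, T A -> Y * s = s * Y -> A * Y = Y * A) ->
  forall A, T A -> center (id_comp G) A.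
Proof.
move=> iso T_conn T1 TG us Tcomm A TA.
have TZs B : T B -> centralizer G s B by move=> TB; split; [apply: TG | apply: Tcomm].
have : id_comp (setI_m (center (id_comp (centralizer G s))) (centralizer G u)) A.
  exists T; split=> // B TB; split; last by split; [apply: TG | apply: Tcomm].
  split; first by exists T.
  by move=> Y [Z [/(_ Y) ZY _ _ /ZY [_ Ys]]]; apply: Tcomm.
by move/(iso A).1 => [Z [/(_ A) ZA _ _ /ZA []]].
Qed.

Lemma semisimple_central_connected_trivial (H T : mset F n) :
  semisimple H -> (forall A, T A -> A \in unitmx) -> T 1%:M ->
  (forall A B, T A -> T B -> T (A *m B)) -> (forall A, T A -> T (invmx A)) ->
  zariski_connected T -> (forall A, T A -> center H A) -> forall A, T A -> A = 1.
Proof.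
move=> [[[H_unit [SH HS]] _] [_ H_rad]] T_unit T1 TM TV T_conn TZ.
have zclH B : zcl T B -> H B.
  by apply: (zcl_min T_unit) => [|A /TZ []//]; split=> //; exists SH.
have zclZ B h : zcl T B -> H h -> B * h = h * B.
  by move=> zB Hh; apply: (zcl_centralizes _ zB) => A /TZ [_]; apply.
move=> A /(sub_zcl T_unit); apply: H_rad => //.
- split; first exact: zcl_closed.
  split=> [|x y|x]; [exact: sub_zcl | exact: zclM | exact: zclV].
- exact: zcl_connected.
- exists 1%N => x /=.
  elim=> [//|z [a [b [za zb ->]]]|a b _ -> _ ->|a _ ->]; last by rewrite invr1.
    have [a_unit b_unit] : a \is a GRing.unit /\ b \is a GRing.unit.
      by split; [case: za | case: zb].
    by rewrite -!mulrA [a * b](zclZ _ _ za (zclH _ zb)) (mulKr b_unit) (mulVr a_unit).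
  by rewrite mulr1.
- move=> x h zx Hh; have h_unit : h \is a GRing.unit by apply: H_unit.
  by rewrite -mulrA (zclZ _ _ zx Hh) (mulKr h_unit).
Qed.

End IsolatedElements.

Theorem mainTheorem7 (F : closedFieldType) (n : nat) (G : 'M[F]_n.+1 -> Prop)
  (g gs gu : 'M[F]_n.+1) :
  alg_group G -> semisimple (id_comp G) -> G g ->
  jordan_decomp g gs gu -> isolated G g gs gu ->
  exists m : nat, (0 < m)%N /\ gs ^+ m = 1.
Proof.
move=> [G_closed G_sub] G0_ss Gg [gE su s_unit s_diag [K uK]] iso; subst g.
have [P [lam [P_unit lam_neq0] sE]] := diagonalizable_conj_dmx s_unit s_diag.
case: (classic (forall i, exists2 m, (0 < m)%N & lam i ^+ m = 1)) => [roots|].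
  by rewrite sE; apply: conj_dmx_finite_order.
move=> /not_all_ex_not [j0 /(orthogonal_to_relations lam_neq0) [c [j cj_neq0] c_orth]].
have compat t : t != 0 -> mult_compatible lam (fun i => t ^ c i).
  exact: orthogonal_exponents_compatible.
have cochar_G := closed_powers_cochar G_closed (subgroupX G_sub Gg) P_unit lam_neq0
  (jordan_mx_exp P_unit sE su uK) compat.
have cochar_comm A Y : cochar_image P c A -> Y * gs = gs * Y -> A * Y = Y * A.
  move=> [t t0 ->]; rewrite sE => Ys; symmetry.
  exact (conj_dmx_commute P_unit (fun i i' => mult_compatible_eq (compat t t0)) Ys).
have cochar_center := isolated_center iso (cochar_image_connected P_unit)
  (cochar_image1 c P_unit) cochar_G (esym su) cochar_comm.
have cochar_trivial := semisimple_central_connected_trivial G0_ss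
  (@cochar_image_unit _ _ _ c P_unit) (cochar_image1 c P_unit) (cochar_imageM P_unit)
  (cochar_imageV P_unit) (cochar_image_connected P_unit) cochar_center.
have [t t0 /eqP[]] := exists_exprz_neq1 F cj_neq0.
by apply: (cochar_eq1 P_unit _ j); apply: cochar_trivial; exists t.
Qed.
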